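(* Let $\breve f\colon\{0,\dots,n\}\to\mathbb{Q}$ and $\breve g\colon\{0,\dots,m\}\to\mathbb{Q}$ be convex and $\breve h$ their min-plus convolution. For every $\delta\ge 0$, the sets $P^-_\delta$ and $P^+_\delta$ are monotone paths.
   Context: Convex means $F(i)-F(i-1)\le F(i+1)-F(i)$ for all interior $i$. $\breve h(k)=\min_{i+j=k}\breve f(i)+\breve g(j)$ for $k\in\{0,\dots,n+m\}$. A point is a pair $(i,j)\in\{0,\dots,n\}\times\{0,\dots,m\}$; it lies on diagonal $i+j$. It is $\delta$-relevant if $\breve f(i)+\breve g(j)\le\breve h(i+j)+\delta$. $P^+_\delta$ is the set of points $(i,k-i)$, $k\in\{0,\dots,n+m\}$, where $i$ is maximal such that $(i,k-i)$ is a $\delta$-relevant point; $P^-_\delta$ is defined likewise with $i$ minimal. A set of points $P$ is a monotone path if for every $k\in\{0,\dots,n+m\}$ it contains exactly one point $(i_k,j_k)$ on diagonal $k$, and $(i_{k+1},j_{k+1})\in\{(i_k+1,j_k),(i_k,j_k+1)\}$ for all $k\in\{0,\dots,n+m-1\}$. *)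

From mathcomp Require Import all_boot all_order all_algebra.
Set Implicit Arguments. Unset Strict Implicit. Unset Printing Implicit Defensive.
Import Order.TTheory GRing.Theory Num.Theory.
Local Open Scope ring_scope.

(* Functions on {0,...,n} are represented as f : nat -> rat; only values
   at 0..n matter. *)

Definition convex_on (n : nat) (F : nat -> rat) : Prop :=
  forall i : nat, (0 < i)%N -> (i < n)%N ->
    F i - F i.-1 <= F i.+1 - F i.

Definition is_point (n m : nat) (p : nat * nat) : bool :=
  (p.1 <= n)%N && (p.2 <= m)%N.

(* Min-plus convolution: h(k) = min_{i+j=k, i<=n, j<=m} f(i)+g(j),
   for k in {0,...,n+m}.  The seed (f (k-m) + g (k-(k-m))) is itself a
   valid term of the minimum when k <= n+m. *)
Definition minconv (n m : nat) (f g : nat -> rat) (k : nat) : rat :=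
  \big[Order.min/(f (k - m)%N + g (k - (k - m))%N)]_(i < n.+1 | (i <= k)%N && (k - i <= m)%N)
     (f i + g (k - i)%N).

Definition relevant (n m : nat) (f g : nat -> rat) (delta : rat) (p : nat * nat) : bool :=
  is_point n m p && (f p.1 + g p.2 <= minconv n m f g (p.1 + p.2) + delta).

Definition Pplus (n m : nat) (f g : nat -> rat) (delta : rat) (p : nat * nat) : Prop :=
  relevant n m f g delta p /\
  forall q : nat * nat, (q.1 + q.2 = p.1 + p.2)%N -> relevant n m f g delta q -> (q.1 <= p.1)%N.

Definition Pminus (n m : nat) (f g : nat -> rat) (delta : rat) (p : nat * nat) : Prop :=
  relevant n m f g delta p /\
  forall q : nat * nat, (q.1 + q.2 = p.1 + p.2)%N -> relevant n m f g delta q -> (p.1 <= q.1)%N.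

Definition monotone_path (n m : nat) (P : nat * nat -> Prop) : Prop :=
  (forall p, P p -> is_point n m p) /\
  (forall k : nat, (k <= n + m)%N ->
     exists p, (P p /\ (p.1 + p.2 = k)%N) /\
       forall q, P q -> (q.1 + q.2 = k)%N -> q = p) /\
  (forall p q, P p -> P q -> (q.1 + q.2 = (p.1 + p.2).+1)%N ->
     q = (p.1.+1, p.2) \/ q = (p.1, p.2.+1)).

From mathcomp Require Import all_boot all_order all_algebra.
From mathcomp Require Import zify lra.
Import Order.TTheory GRing.Theory Num.Theory.
Local Open Scope ring_scope.

(* Write h for the min-plus convolution of f and g.  On every diagonal k the
   minimisers of h k are relevant, so each diagonal has relevant points.  The
   key facts are two exchange arguments driven by convexity (increments of a
   convex sequence are nondecreasing):
   - going up a diagonal, some relevant point lies at most one column to the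
     right of any given relevant point (convexity of f);
   - going down a diagonal, some relevant point lies weakly to the left of any
     given relevant point (convexity of g).
   Together they pin the leftmost relevant point of diagonal k+1 to the column
   of, or the column right after, the leftmost relevant point of diagonal k:
   P^-_delta is a monotone path.  Exchanging f and g mirrors the grid, the
   convolution is symmetric, and the rightmost relevant points for (f, g) are
   the mirror images of the leftmost ones for (g, f); so P^+_delta is the
   mirror of a monotone path, hence a monotone path. *)

Lemma convex_increments_mono (N : nat) (F : nat -> rat) : convex_on N F ->
  forall a b, (a <= b)%N -> (b < N)%N -> F a.+1 - F a <= F b.+1 - F b.
Proof.
move=> hF a b hab hbN.
pose D : {pred nat} := [pred i | (i < N)%N].
have interval : {in D &, forall i j k, (i < k < j)%N -> k \in D}.
  by move=> i j _ hj k /andP[_ hkj]; rewrite /D !inE in hj *; lia.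
have step : {in D, forall i, i.+1 \in D -> F i.+1 - F i <= F i.+2 - F i.+1}.
  by move=> i _ hi; apply: hF.
have := homo_leq_in (f := fun i => F i.+1 - F i) (r := fun x y => x <= y)
  (@lexx _ _) (@le_trans _ _) interval step.
by apply=> //; rewrite /D inE; lia.
Qed.

Section MinPlusConvolution.
Variables (n m : nat) (f g : nat -> rat).
Local Notation h := (minconv n m f g).

Lemma minconv_le a b : (a <= n)%N -> (b <= m)%N -> h (a + b) <= f a + g b.
Proof.
move=> ha hb; have ha' : (a < n.+1)%N by rewrite ltnS.
rewrite /minconv (bigD1 (Ordinal ha')) /=; last by apply/andP; split; lia.
by rewrite addKn ge_min lexx.
Qed.

Lemma minconv_attained k : (k <= n + m)%N ->
  exists a b, [/\ (a + b = k)%N, (a <= n)%N, (b <= m)%N & f a + g b = h k].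
Proof.
move=> hk; rewrite /minconv.
apply: (big_ind (fun x => exists a b,
  [/\ (a + b = k)%N, (a <= n)%N, (b <= m)%N & f a + g b = x])).
- by exists (k - m)%N, (k - (k - m))%N; split => //; lia.
- by move=> x y hx hy; rewrite /Order.min; case: ifP.
- move=> i /andP[hik hkm]; exists (nat_of_ord i), (k - i)%N.
  by split => //; [lia | have := ltn_ord i; lia].
Qed.

End MinPlusConvolution.

Lemma minconv_sym n m f g k : (k <= n + m)%N -> minconv m n g f k = minconv n m f g k.
Proof.
move=> hk; apply/le_anti/andP; split.
- have [a [b [<- ha hb <-]]] := minconv_attained n m f g k hk.
  by rewrite addnC addrC minconv_le.
- have [b [a [<- hb ha <-]]] := minconv_attained m n g f k ltac:(lia).
  by rewrite addnC addrC minconv_le.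
Qed.

Section RelevantPoints.
Variables (n m : nat) (f g : nat -> rat) (delta : rat).
Local Notation h := (minconv n m f g).
Local Notation rel := (relevant n m f g delta).

Lemma relevantP a b : reflect [/\ (a <= n)%N, (b <= m)%N & f a + g b <= h (a + b) + delta]
  (rel (a, b)).
Proof. by rewrite /relevant /is_point /= -andbA; apply: and3P. Qed.

Lemma relevant_swap a b : relevant m n g f delta (b, a) = rel (a, b).
Proof.
rewrite /relevant /is_point /= [(b <= m)%N && _]andbC.
have [/andP[ha hb]|//] := boolP ((a <= n) && (b <= m))%N.
by rewrite addnC [g b + _]addrC minconv_sym //; lia.
Qed.

Hypothesis hdelta : 0 <= delta.

Lemma minimiser_relevant k : (k <= n + m)%N ->
  exists a b, [/\ (a + b = k)%N, f a + g b = h k & rel (a, b)].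
Proof.
move=> hk; have [a [b [hab ha hb habk]]] := minconv_attained n m f g k hk.
exists a, b; split => //; apply/relevantP; split => //.
by rewrite hab habk lerDl.
Qed.

Hypotheses (hf : convex_on n f) (hg : convex_on m g).

Lemma relevant_step_up i j : rel (i, j) -> (i + j < n + m)%N ->
  exists a b, [/\ (a + b = (i + j).+1)%N, (a <= i.+1)%N & rel (a, b)].
Proof.
move=> /relevantP[hi hj hij] hk.
have [a [b [hab habh rab]]] := minimiser_relevant _ hk.
have [hai|hia] := leqP a i.+1; first by exists a, b.
have /relevantP[ha hb _] := rab.
exists i.+1, j; split => //; apply/relevantP; split; [lia | lia |].
have ea : a = a.-1.+1 by lia.
have slope := convex_increments_mono n f hf i a.-1 ltac:(lia) ltac:(lia).
have hprev := minconv_le n m f g a.-1 b ltac:(lia) hb.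
rewrite -ea (_ : (a.-1 + b)%N = (i + j)%N) in slope hprev; last by lia.
rewrite addSn -habh; lra.
Qed.

Lemma relevant_step_down k a b : (a + b = k.+1)%N -> rel (a, b) ->
  exists c d, [/\ (c + d = k)%N, (c <= a)%N & rel (c, d)].
Proof.
move=> hab /relevantP[ha hb habh].
have [c [d [hcd hcdh rcd]]] := minimiser_relevant k ltac:(lia).
have [hca|hac] := leqP c a; first by exists c, d.
have /relevantP[hc hd _] := rcd.
exists a, b.-1; split; [lia | by [] |]; apply/relevantP; split; [lia | lia |].
have eb : b = b.-1.+1 by lia.
have slope := convex_increments_mono m g hg d b.-1 ltac:(lia) ltac:(lia).
have hnext := minconv_le n m f g c d.+1 hc ltac:(lia).
rewrite -eb in slope; rewrite addnS hcd -hab in hnext.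
rewrite (_ : (a + b.-1)%N = k) -?hcdh; [lra | lia].
Qed.

Local Notation Pminus := (Pminus n m f g delta).

Lemma Pminus_unique p q : Pminus p -> Pminus q -> (p.1 + p.2 = q.1 + q.2)%N -> p = q.
Proof.
case: p q => [a b] [c d] [rp minp] [rq minq] /= hs.
have := minp (c, d) (esym hs) rq; have := minq (a, b) hs rp => /= hca hac.
by have [-> ->] : a = c /\ b = d by lia.
Qed.

Lemma Pminus_exists k : (k <= n + m)%N -> exists p, Pminus p /\ (p.1 + p.2 = k)%N.
Proof.
move=> hk; pose onDiag i := (i <= k)%N && rel (i, (k - i)%N).
have onDiagP q : (q.1 + q.2 = k)%N -> rel q -> onDiag q.1.
  case: q => a b /= hab rq; rewrite /onDiag (_ : (k - a)%N = b); last by lia.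
  by rewrite rq andbT; lia.
have [a [b [hab _ rab]]] := minimiser_relevant k hk.
have : exists i, onDiag i by exists a; apply: (onDiagP (a, b)).
case/ex_minnP => i /andP[hik ri] mini.
exists (i, (k - i)%N); split => /=; last lia.
by split => // q /= hq rq; apply/mini/onDiagP => //; lia.
Qed.

Lemma Pminus_step i j a b : Pminus (i, j) -> Pminus (a, b) -> (a + b = (i + j).+1)%N ->
  (a, b) = (i.+1, j) \/ (a, b) = (i, j.+1).
Proof.
move=> [rij minij] [rab minab] hs.
have [c [d [hcd hca rcd]]] := relevant_step_down (i + j) a b hs rab.
have hic := minij (c, d) hcd rcd.
have /relevantP[ha hb _] := rab.
have [c' [d' [hcd' hci rcd']]] := relevant_step_up i j rij ltac:(lia).
have hac := minab (c', d') ltac:(rewrite /= hcd'; lia) rcd'.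
rewrite /= in hic hac; have [ea|ea] : a = i.+1 \/ a = i by lia.
- by left; congr pair; lia.
- by right; congr pair; lia.
Qed.

Lemma Pminus_monotone_path : monotone_path n m Pminus.
Proof.
split; first by case=> a b [/relevantP[ha hb _] _]; apply/andP.
split=> [k hk | [i j] [a b] pij pab /= hs]; last exact: Pminus_step.
have [p [pp hp]] := Pminus_exists k hk.
by exists p; split => // q pq hq; apply: Pminus_unique; rewrite ?hp ?hq.
Qed.

End RelevantPoints.

Lemma Pplus_swap n m f g delta a b :
  Pplus n m f g delta (a, b) <-> Pminus m n g f delta (b, a).
Proof.
rewrite /Pplus /Pminus relevant_swap /=; split=> -[rab maxab]; split => //.
- by case=> c d /= hcd rcd; have := maxab (d, c); rewrite -relevant_swap /=; lia.
- by case=> c d /= hcd rcd; have := maxab (d, c); rewrite relevant_swap /=; lia.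
Qed.

Lemma monotone_path_swap n m (P Q : nat * nat -> Prop) :
  (forall a b, Q (a, b) <-> P (b, a)) -> monotone_path m n P -> monotone_path n m Q.
Proof.
move=> QP [ptP [diagP stepP]]; split; [|split].
- by case=> a b /QP /ptP; rewrite /is_point andbC.
- move=> k hk; have [[b a] [[pp /= hp] uniqP]] := diagP k ltac:(lia).
  exists (a, b); split; first by split; [apply/QP | rewrite /=; lia].
  by case=> c d /QP qc /= hcd; case: (uniqP (d, c) qc ltac:(rewrite /=; lia)) => -> ->.
- case=> [a b] [c d] /QP pab /QP pcd /= hs.
  by case: (stepP _ _ pab pcd ltac:(rewrite /=; lia)) => -[-> ->]; [right | left].
Qed.

Theorem mainTheorem12 (n m : nat) (f g : nat -> rat)
  (hf : convex_on n f) (hg : convex_on m g) (delta : rat) (hdelta : 0 <= delta) :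
  monotone_path n m (Pminus n m f g delta) /\ monotone_path n m (Pplus n m f g delta).
Proof.
split; first exact: Pminus_monotone_path.
apply: (monotone_path_swap n m _ _ (Pplus_swap n m f g delta)).
exact: Pminus_monotone_path.
Qed.
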